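(* Let $v\in\mathbb{C}^{1,n}$. If $\alpha$ is a nodal root of the marked blowup $(S^v,Y^v,\phi^v)$, then $\alpha\cdot v=0$.
   Context: $\mathbb{Z}^{1,n}$ has basis $e_0,\dots,e_n$ with $e_0^2=1$, $e_i^2=-1$ ($i\ge1$), $e_i\cdot e_j=0$; $\mathbb{C}^{1,n}=\mathbb{Z}^{1,n}\otimes\mathbb{C}$. Positive roots $\Phi_n^+$: elements of the orbits of $\alpha_0=e_0-e_1-e_2-e_3$, $\alpha_i=e_i-e_{i+1}$ under the group $W_n$ generated by reflections $s_\alpha(x)=x+(x\cdot\alpha)\alpha$, which are nonnegative combinations of the $\alpha_i$. Construction: $X\subset\mathbf{P}^2$ is the cuspidal cubic $p(t)=[1:t:t^3]$; $t_0=(v\cdot e_0)/3$, $p_i=p(v\cdot e_i-t_0)$; $q_1,\dots,q_k$ the distinct $p_i$, $h_m=\#\{i:p_i=q_m\}$. $S^v$ is obtained by blowing up each $q_m$ and then successively the intersection point of the strict transform of $X$ with the newest exceptional curve, $h_m$ blowups over $q_m$. $Y^v$ is the strict transform of $X$. $\phi^v(e_0)$ is the class of a pulled-back line; if $\{i:p_i=q_m\}=\{i_1<\dots<i_{h_m}\}$, $\phi^v(e_{i_r})$ is the class of the total transform of the $r$-th exceptional curve over $q_m$. A nodal root is $\alpha\in\Phi_n^+$ with $\phi^v(\alpha)$ the class of an effective irreducible curve. *)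

From HB Require Import structures.
From mathcomp Require Import all_boot all_order all_algebra.
From mathcomp Require Import reals.
From mathcomp.real_closed Require Import complex.
From mathcomp.multinomials Require Import mpoly.
Set Implicit Arguments. Unset Strict Implicit. Unset Printing Implicit Defensive.
Import Order.TTheory GRing.Theory Num.Theory.
Local Open Scope ring_scope.

(* The lattice Z^{1,n}: vectors indexed by 'I_n.+1 (index 0 = e_0).    *)
Definition lat (n : nat) := {ffun 'I_n.+1 -> int}.

Definition evec (n : nat) (k : nat) : lat n :=
  [ffun j : 'I_n.+1 => ((j : nat) == k)%:Z].

Definition msign (n : nat) (i : 'I_n.+1) : int := if (i : nat) == 0%N then 1 else -1.

Definition mdot (n : nat) (x y : lat n) : int :=
  \sum_(i < n.+1) msign i * x i * y i.

Definition mdotC (R : realType) (n : nat) (x : lat n) (v : 'I_n.+1 -> R[i]) : R[i] :=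
  \sum_(i < n.+1) ((msign i * x i)%:~R) * v i.

Definition refl (n : nat) (a x : lat n) : lat n :=
  [ffun i => x i + mdot x a * a i].

Definition sroot (n : nat) (j : 'I_n) : lat n :=
  if (j : nat) == 0%N then
    [ffun i => evec n 0 i - evec n 1 i - evec n 2 i - evec n 3 i]
  else [ffun i => evec n j i - evec n j.+1 i].

(* W_n-orbit of the simple roots: apply a word of simple reflections *)
Definition apply_word (n : nat) (w : seq 'I_n) (x : lat n) : lat n :=
  foldr (fun j y => refl (sroot j) y) x w.

Definition in_simple_orbits (n : nat) (a : lat n) : Prop :=
  exists (w : seq 'I_n) (j : 'I_n), a = apply_word w (sroot j).

Definition nonneg_comb (n : nat) (a : lat n) : Prop :=
  exists c : 'I_n -> int, (forall j, 0 <= c j) /\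
    a = \sum_(j < n) [ffun i => c j * sroot j i].

Definition pos_root (n : nat) (a : lat n) : Prop :=
  in_simple_orbits a /\ nonneg_comb a.

(* X : y^3 = x^2 z, p(t) = [1:t:t^3];  t_0 = (v.e_0)/3 ;               *)
(* p_i = p(tau_i) with tau_i = v.e_i - t_0 = - v_i - v_0/3 (i >= 1).    *)
(* p is injective, so p_i = p_j iff tau_i = tau_j.                      *)
Section Construction.
Variables (R : realType) (n : nat) (v : 'I_n.+1 -> R[i]).

Definition tau (i : 'I_n.+1) : R[i] := - v i - v ord0 / 3%:R.

(* 0-based rank of i among the indices j >= 1 with p_j = p_i:
   e_i is sent by phi^v to the (rank0 i).+1 -th exceptional curve over p_i *)
Definition rank0 (i : 'I_n.+1) : nat :=
  #|[set j : 'I_n.+1 | (0 < j)%N && (j < i)%N && (tau j == tau i)]|.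
End Construction.

Definition u0 : 'I_2 := ord0.
Definition w1 : 'I_2 := ord_max.

Definition ord_at0 (C : ringType) (f : {mpoly C[2]}) : nat :=
  foldr minn (msize f) [seq mdeg m | m <- msupp f].

(* strict transform under the blowup of the origin, in the chart
   (u, w) |-> (u, u w) containing the strict transform of the curve w = 0:
   f(u, u w) / u^(ord f) *)
Definition blowup_step (C : ringType) (f : {mpoly C[2]}) : {mpoly C[2]} :=
  \sum_(m <- msupp f)
     f@_m *: ('X_u0 ^+ (mdeg m - ord_at0 f)%N * 'X_w1 ^+ (m w1)).

(* local equation near p(t) of the affine part F(1,y,z) of F, in the
   coordinates u = y - t, w = z - y^3 (in which X is {w = 0}) *)
Definition local_eq (C : ringType) (F : {mpoly C[3]}) (t : C) : {mpoly C[2]} :=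
  F \mPo [tuple 1; 'X_u0 + t%:MP; 'X_w1 + ('X_u0 + t%:MP) ^+ 3].

(* multiplicity of (the strict transform of) F at the (r+1)-th point
   infinitely near to p(t) along X (r = 0 : the point p(t) itself) *)
Definition inf_mult (C : ringType) (F : {mpoly C[3]}) (t : C) (r : nat) : nat :=
  ord_at0 (iter r (@blowup_step C) (local_eq F t)).

Definition irreducible_form (C : ringType) (F : {mpoly C[3]}) (d : nat) : Prop :=
  [/\ (0 < d)%N, F != 0, F \is ishomog1 d (@mdeg 3) &
      forall G H : {mpoly C[3]}, F = G * H -> (msize G <= 1)%N \/ (msize H <= 1)%N].

Section Nodal.
Variables (R : realType) (n : nat) (v : 'I_n.+1 -> R[i]).

(* phi^v(a) is the class of the strict transform of an irreducible plane
   curve {F = 0} of degree d: d L - sum_i mult_{p_i, rank}(F) E_i *)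
Definition curve_class (a : lat n) : Prop :=
  exists (F : {mpoly R[i][3]}) (d : nat), irreducible_form F d /\
    a = [ffun i : 'I_n.+1 => if (i : nat) == 0%N then (d : int)
                           else - ((inf_mult F (tau v i) (rank0 v i)) : int)].

(* phi^v(a) is the class of (the strict transform of) an exceptional curve:
   E_r - E_{r+1} over some q_m, or the last one E_{h_m} *)
Definition exc_class (a : lat n) : Prop :=
  (exists i j : 'I_n.+1, [/\ (0 < i)%N, (i < j)%N, tau v i = tau v j,
      (forall k : 'I_n.+1, (i < k)%N -> (k < j)%N -> tau v k != tau v i) &
      a = [ffun k => evec n i k - evec n j k]]) \/
  (exists i : 'I_n.+1, [/\ (0 < i)%N,
      (forall k : 'I_n.+1, (i < k)%N -> tau v k != tau v i) &
      a = evec n i]).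

Definition nodal_root (a : lat n) : Prop :=
  pos_root a /\ (curve_class a \/ exc_class a).
End Nodal.

(* Positive roots are orthogonal to K = -3e_0 + e_1 + ... + e_n and have square -2,
   since reflections in roots of square -2 orthogonal to K preserve both properties.
   An exceptional class e_i - e_j with p_i = p_j is killed by v because p_i = p_j
   forces v_i = v_j, and e_i itself has e_i.K = -1.
   For the class d e_0 - sum m_i e_i of an irreducible curve {F = 0}, the two
   numerical conditions read sum m_i = 3d and sum m_i^2 = d^2 + 2; the second rules
   out the cuspidal cubic itself (d = 3 and all m_i = 1). Otherwise F(1, t, t^3) is a
   nonzero polynomial of degree at most 3d with no t^(3d-1) term, and it vanishes at
   tau_i to order at least the sum of the multiplicities of F at the points infinitely
   near p(tau_i) along X (restrict the local equations to X and blow up). These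
   3d roots are therefore all of its roots, so sum m_i tau_i = 0, which is a.v = 0. *)

From HB Require Import structures.
From mathcomp Require Import all_boot all_order all_algebra.
From mathcomp Require Import reals.
From mathcomp.real_closed Require Import complex.
From mathcomp.multinomials Require Import mpoly.
From mathcomp Require Import ring zify.
Import Order.TTheory GRing.Theory Num.Theory.
Local Open Scope ring_scope.
Set Implicit Arguments. Unset Strict Implicit.

Section MinkowskiForm.
Variable n : nat.
Implicit Types (a x y : lat n).

Lemma mdot_sym x y : mdot x y = mdot y x.
Proof. by apply: eq_bigr => i _; rewrite mulrAC. Qed.

Lemma mdotBl x y z : mdot (x - y) z = mdot x z - mdot y z.
Proof.
by rewrite /mdot -sumrB; apply: eq_bigr => i _; rewrite !ffunE mulrBr mulrBl.
Qed.

Lemma mdot_evec k y :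
  (k <= n)%N -> mdot (evec n k) y = msign (inord k : 'I_n.+1) * y (inord k).
Proof.
move=> kn; rewrite /mdot (bigD1 (inord k)) //= ffunE inordK // eqxx mulr1.
rewrite big1 ?addr0 // => i ik; rewrite ffunE.
case: eqP => [ik'|]; last by rewrite mulr0 mul0r.
by case/eqP: ik; apply: val_inj; rewrite /= inordK // ik'.
Qed.

Lemma mdot_refl a x y : mdot (refl a x) y = mdot x y + mdot x a * mdot a y.
Proof.
by rewrite /mdot mulr_sumr -big_split /=; apply: eq_bigr => i _; rewrite ffunE; ring.
Qed.

Lemma mdot_refl_orth a x y : mdot a y = 0 -> mdot (refl a x) y = mdot x y.
Proof. by move=> ay0; rewrite mdot_refl ay0 mulr0 addr0. Qed.

Lemma mdot_refl_norm a x : mdot a a = -2 -> mdot (refl a x) (refl a x) = mdot x x.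
Proof.
move=> aa; rewrite mdot_refl (mdot_sym x) mdot_refl (mdot_sym a (refl a x)) mdot_refl aa.
rewrite (mdot_sym a x); ring.
Qed.

Definition canon : lat n := [ffun i : 'I_n.+1 => if (i : nat) == 0%N then -3 else 1].

Hypothesis n_ge3 : (3 <= n)%N.

Lemma sroot_canon_norm (j : 'I_n) :
  mdot (sroot j) canon = 0 /\ mdot (sroot j) (sroot j) = -2.
Proof.
rewrite /sroot; case: ifP => [_|/negbT j0].
  have le3 k : (k <= 3)%N -> (k < n.+1)%N by lia.
  have -> : [ffun i => evec n 0 i - evec n 1 i - evec n 2 i - evec n 3 i]
      = evec n 0 - evec n 1 - evec n 2 - evec n 3 by apply/ffunP => i; rewrite !ffunE.
  by rewrite !mdotBl !mdot_evec ?(leq_trans _ n_ge3) // !ffunE /msign !inordK ?le3.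
have -> : [ffun i => evec n j i - evec n j.+1 i] = evec n j - evec n j.+1.
  by apply/ffunP => i; rewrite !ffunE.
have jn : (j < n)%N := ltn_ord j.
rewrite !mdotBl !mdot_evec ?(ltnW jn) // !ffunE /msign !inordK ?ltnS ?(ltnW jn) //=.
by rewrite (negbTE j0) !eqxx (gtn_eqF (ltnSn j)) (ltn_eqF (ltnSn j)).
Qed.

Lemma pos_root_canon_norm a : pos_root a -> mdot a canon = 0 /\ mdot a a = -2.
Proof.
case=> -[w [j ->]] _; elim: w => [|k w [IHc IHn]] /=; first exact: sroot_canon_norm.
have [kc kn] := sroot_canon_norm k.
by rewrite mdot_refl_orth // mdot_refl_norm.
Qed.

End MinkowskiForm.

Section ExceptionalClasses.
Variables (R : realType) (n : nat) (v : 'I_n.+1 -> R[i]).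

Lemma tau_eq (i j : 'I_n.+1) : tau v i = tau v j -> v i = v j.
Proof. by move/addIr/oppr_inj. Qed.

Lemma mdotC_Bl (x y : lat n) : mdotC (x - y) v = mdotC x v - mdotC y v.
Proof.
by rewrite /mdotC -sumrB; apply: eq_bigr => k _; rewrite !ffunE mulrBr intrB mulrBl.
Qed.

Lemma mdotC_evec (i : 'I_n.+1) : mdotC (evec n i) v = (msign i)%:~R * v i.
Proof.
rewrite /mdotC (bigD1 i) //= ffunE eqxx mulr1 big1 ?addr0 // => k ki.
by rewrite ffunE (inj_eq val_inj) (negbTE ki) mulr0 mul0r.
Qed.

Lemma exc_class_mdotC (a : lat n) : exc_class v a -> mdot a (canon n) = 0 -> mdotC a v = 0.
Proof.
case=> [[i [j [i_gt0 ij tij _ ->]]]|[i [i_gt0 _ ->]]] aK.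
  have -> : [ffun k => evec n i k - evec n j k] = evec n i - evec n j.
    by apply/ffunP => k; rewrite !ffunE.
  rewrite mdotC_Bl !mdotC_evec /msign (gtn_eqF i_gt0) (gtn_eqF (leq_ltn_trans (leq0n i) ij)).
  by rewrite (tau_eq tij) subrr.
move: aK; rewrite mdot_evec; last by rewrite -ltnS.
by rewrite inord_val ffunE /msign (gtn_eqF i_gt0).
Qed.

End ExceptionalClasses.

Lemma rmorph_mmap (k : nat) (R0 : nzRingType) (S1 S2 : comNzRingType)
    (f1 : R0 -> S1) (f2 : R0 -> S2) (g : {rmorphism S1 -> S2}) (h : 'I_k -> S1)
    (p : {mpoly R0[k]}) :
  (forall c, g (f1 c) = f2 c) -> g (mmap f1 h p) = mmap f2 (g \o h) p.
Proof.
move=> gf; rewrite /mmap rmorph_sum; apply: eq_bigr => m _.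
rewrite rmorphM gf /mmap1 rmorph_prod; congr (_ * _); apply: eq_bigr => i _.
by rewrite rmorphXn.
Qed.

Lemma foldr_minn_le (s : seq nat) b x : x \in s -> (foldr minn b s <= x)%N.
Proof.
elim: s => //= y s IHs; rewrite inE => /predU1P [->|/IHs]; first exact: geq_minl.
exact: leq_trans (geq_minr _ _).
Qed.

Section MultiplicitiesAlongTheCurve.
Variable C : fieldType.

Definition w0_subst (k : 'I_2) : {poly C} := if k == u0 then 'X else 0.

Definition restr_w0 (f : {mpoly C[2]}) : {poly C} := mmap polyC w0_subst f.

Lemma restr_w0XX (a b : nat) : restr_w0 ('X_u0 ^+ a * 'X_w1 ^+ b) = 'X ^+ a * 0 ^+ b.
Proof. by rewrite /restr_w0 !rmorphM !rmorphXn /= !mmapX !mmap1U. Qed.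

Lemma mdeg2 (m : 'X_{1..2}) : mdeg m = (m u0 + m w1)%N.
Proof. by rewrite mdegE big_ord_recr big_ord1; congr (m _ + _)%N; apply: val_inj. Qed.

Lemma ord_at0_le (f : {mpoly C[2]}) m : m \in msupp f -> (ord_at0 f <= mdeg m)%N.
Proof. by move=> mf; apply/foldr_minn_le/map_f. Qed.

(* On [w = 0] the chart [(u, w) |-> (u, u w)] of the blowup is the identity, so
   restricting to the curve commutes with [blowup_step] up to the factor [u ^ ord]. *)
Lemma restr_w0_blowup (f : {mpoly C[2]}) :
  restr_w0 f = 'X ^+ ord_at0 f * restr_w0 (blowup_step f).
Proof.
rewrite /blowup_step /restr_w0 raddf_sum mulr_sumr {1}/mmap /=.
apply: eq_big_seq => m mf; rewrite mmapZ -/(restr_w0 _) restr_w0XX mulrCA.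
rewrite /mmap1 big_ord_recr big_ord1 /=.
have -> : widen_ord (leqnSn 1) ord0 = u0 by apply: val_inj.
have [m_w0|w_gt0] := posnP (m w1); last by rewrite !expr0n !gtn_eqF // !mulr0.
by rewrite m_w0 !mulr1 -exprD subnKC ?ord_at0_le // mdeg2 m_w0 addn0.
Qed.

Lemma restr_w0_iter_blowup (f : {mpoly C[2]}) h :
  restr_w0 f = 'X ^+ (\sum_(r < h) ord_at0 (iter r (@blowup_step C) f)) *
               restr_w0 (iter h (@blowup_step C) f).
Proof.
elim: h => [|h IHh]; first by rewrite big_ord0 mul1r.
by rewrite IHh big_ord_recr exprD -mulrA -restr_w0_blowup.
Qed.

Definition pullback (F : {mpoly C[3]}) : {poly C} :=
  mmap polyC (fun k : 'I_3 => [:: 1; 'X; 'X^3]`_k) F.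

Lemma restr_w0_local_eq (F : {mpoly C[3]}) t :
  restr_w0 (local_eq F t) = pullback F \Po ('X + t%:P).
Proof.
rewrite /local_eq /comp_mpoly /restr_w0 (@rmorph_mmap _ _ _ _ _ polyC); last first.
  by move=> c /=; rewrite mmapC.
rewrite /pullback (@rmorph_mmap _ _ _ _ _ polyC (comp_poly ('X + t%:P))); last first.
  by move=> c /=; rewrite comp_polyC.
apply: eq_bigr => m _; congr (_ * _).
apply: mmap1_eq => -[[|[|[|//]]] i3]; rewrite /tnth /=.
- by rewrite comp_polyC rmorph1.
- by rewrite (comp_polyX (R:=C)) mmapD mmapC mmapX mmap1U.
- rewrite !rmorphXn /= (comp_polyX (R:=C)) mmapD mmapX mmap1U add0r.
  by rewrite [LHS]rmorphXn /= mmapD mmapC mmapX mmap1U.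
Qed.

Lemma pullback_inf_mult_dvd (F : {mpoly C[3]}) t h :
  ('X - t%:P) ^+ (\sum_(r < h) inf_mult F t r) %| pullback F.
Proof.
have := restr_w0_local_eq F t; rewrite (restr_w0_iter_blowup _ h) => E.
rewrite -(comp_polyXaddC_K (pullback F) t) -E comp_polyM rmorphXn /= comp_polyX.
exact: dvdp_mulIl.
Qed.

End MultiplicitiesAlongTheCurve.

Definition i0 : 'I_3 := ord0.
Definition i1 : 'I_3 := @Ordinal 3 1 isT.
Definition i2 : 'I_3 := @Ordinal 3 2 isT.

Lemma ord3P (i : 'I_3) : [\/ i = i0, i = i1 | i = i2].
Proof. by case: i => -[|[|[|//]]] i3; [apply: Or31|apply: Or32|apply: Or33]; apply: val_inj. Qed.

Lemma big_ord3 (T : Type) (idx : T) (op : Monoid.law idx) (G : 'I_3 -> T) :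
  \big[op/idx]_(i < 3) G i = op (op (G i0) (G i1)) (G i2).
Proof.
rewrite !big_ord_recr big_ord0 /= Monoid.mul1m.
by congr (op (op (G _) (G _)) (G _)); apply: val_inj.
Qed.

Lemma mdeg3 (m : 'X_{1..3}) : mdeg m = (m i0 + m i1 + m i2)%N.
Proof. by rewrite mdegE big_ord3. Qed.

Section Pullback.
Variable C : fieldType.
Implicit Types (F : {mpoly C[3]}) (m : 'X_{1..3}).

Lemma pullback_coef F k :
  (pullback F)`_k = \sum_(m <- msupp F) F@_m * ((m i1 + 3 * m i2)%N == k)%:R.
Proof.
rewrite /pullback /mmap coef_sum; apply: eq_bigr => m _.
by rewrite /mmap1 big_ord3 /= expr1n mul1r -exprM -exprD coefCM coefXn eq_sym.
Qed.

Lemma size_pullback F d : F \is d.-homog -> (size (pullback F) <= (3 * d).+1)%N.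
Proof.
move=> /dhomogP Fd; apply/leq_sizeP => k dk; rewrite pullback_coef big_seq big1 // => m mF.
have md : mdeg m = d := Fd m mF; rewrite mdeg3 in md.
by rewrite ltn_eqF ?mulr0 //; lia.
Qed.

Lemma pullback_coef_pred F d : (0 < d)%N -> F \is d.-homog -> (pullback F)`_(3 * d).-1 = 0.
Proof.
move=> d_gt0 /dhomogP Fd; rewrite pullback_coef big_seq big1 // => m mF.
have md : mdeg m = d := Fd m mF; rewrite mdeg3 in md.
suff /negbTE -> : (m i1 + 3 * m i2)%N != (3 * d).-1 by rewrite mulr0.
by apply/eqP; lia.
Qed.

Lemma pullbackD F G : pullback (F + G) = pullback F + pullback G.
Proof. exact: rmorphD. Qed.

Lemma pullbackM F G : pullback (F * G) = pullback F * pullback G.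
Proof. exact: rmorphM. Qed.

End Pullback.

Lemma monomial_shift_identity (T : comNzRingType) (x y z : T) (a c q r : nat) :
  x ^+ a * y ^+ (3 * q + r) * z ^+ c =
  x ^+ a * y ^+ r * z ^+ c * ((y ^+ 3) ^+ q - (x ^+ 2 * z) ^+ q)
  + x ^+ (a + 2 * q) * y ^+ r * z ^+ (c + q).
Proof.
rewrite (exprD y (3 * q)) (exprM y 3 q) (exprD x a) (exprM x 2 q) (exprD z c q).
by rewrite (exprMn q (x ^+ 2) z); ring.
Qed.

Section CuspidalCubic.
Variable C : fieldType.
Implicit Types (F : {mpoly C[3]}) (m : 'X_{1..3}).

Definition cusp : {mpoly C[3]} := 'X_i1 ^+ 3 - 'X_i0 ^+ 2 * 'X_i2.

Lemma pullback_cusp : pullback cusp = 0.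
Proof.
rewrite /pullback rmorphB /= [X in X - _]rmorphXn [X in _ - X]rmorphM /= rmorphXn /=.
by rewrite !mmapX !mmap1U /= expr1n mul1r subrr.
Qed.

Lemma cusp_homog : cusp \is 3.-homog.
Proof.
have homX i : ('X_i : {mpoly C[3]}) \is 1.-homog by rewrite dhomogX /= mdeg1.
by rewrite rpredB ?(dhomogMn 3 (homX i1)) ?(dhomogM (dhomogMn 2 (homX i0)) (homX i2)).
Qed.

Definition cusp_reduce m : 'X_{1..3} :=
  [multinom (if (i : nat) == 0%N then (m i0 + 2 * (m i1 %/ 3))%N
             else if (i : nat) == 1%N then (m i1 %% 3)%N else (m i2 + m i1 %/ 3)%N) | i < 3].

Lemma cusp_reduceE m :
  [/\ cusp_reduce m i0 = (m i0 + 2 * (m i1 %/ 3))%N, cusp_reduce m i1 = (m i1 %% 3)%N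
    & cusp_reduce m i2 = (m i2 + m i1 %/ 3)%N].
Proof. by rewrite !mnmE. Qed.

Lemma mdeg_cusp_reduce m : mdeg (cusp_reduce m) = mdeg m.
Proof. by have [r0 r1 r2] := cusp_reduceE m; rewrite !mdeg3 r0 r1 r2 {3}(divn_eq (m i1) 3); lia. Qed.

Lemma mpolyX3 m : 'X_[m] = 'X_i0 ^+ m i0 * 'X_i1 ^+ m i1 * 'X_i2 ^+ m i2 :> {mpoly C[3]}.
Proof. by rewrite mpolyXE_id big_ord3. Qed.

Lemma cusp_reduce_monomial m : exists H, 'X_[m] = cusp * H + 'X_[cusp_reduce m].
Proof.
have [r0 r1 r2] := cusp_reduceE m.
set q := (m i1 %/ 3)%N; set r := (m i1 %% 3)%N.
pose S : {mpoly C[3]} := \sum_(k < q) ('X_i1 ^+ 3) ^+ (q.-1 - k) * ('X_i0 ^+ 2 * 'X_i2) ^+ k.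
exists ('X_i0 ^+ m i0 * 'X_i1 ^+ r * 'X_i2 ^+ m i2 * S).
rewrite (mpolyX3 m) (mpolyX3 (cusp_reduce m)) r0 r1 r2 {1}(divn_eq (m i1) 3) -/q -/r mulnC.
by rewrite monomial_shift_identity subrXX mulrCA.
Qed.

Definition cusp_rem F : {mpoly C[3]} := \sum_(m <- msupp F) F@_m *: 'X_[cusp_reduce m].

Lemma cusp_division F : exists H, F = cusp * H + cusp_rem F.
Proof.
rewrite {1}(mpolyE F) /cusp_rem; elim: (msupp F) => [|m s [H IH]].
  by exists 0; rewrite !big_nil mulr0 addr0.
have [Hm Xm] := cusp_reduce_monomial m.
exists (F@_m *: Hm + H); rewrite !big_cons IH Xm mulrDr -scalerAr scalerDr.
by rewrite addrACA.
Qed.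

Lemma cusp_rem_homog F d : F \is d.-homog -> cusp_rem F \is d.-homog.
Proof.
move=> /dhomogP Fd; rewrite /cusp_rem big_seq; apply: rpred_sum => m mF.
by rewrite rpredZ // dhomogX /= mdeg_cusp_reduce Fd.
Qed.

Lemma cusp_rem_reduced F m : m \in msupp (cusp_rem F) -> (m i1 < 3)%N.
Proof.
move=> /msupp_sum_le /flattenP [_ /mapP [m' _ ->]] /msuppZ_le.
by rewrite msuppX inE => /eqP ->; have [_ -> _] := cusp_reduceE m'; rewrite ltn_mod.
Qed.

Lemma pullback_cusp_rem F : pullback (cusp_rem F) = pullback F.
Proof.
have [H {2}->] := cusp_division F.
by rewrite pullbackD pullbackM pullback_cusp mul0r add0r.
Qed.

(* A monomial of degree [d] with [m i1 < 3] is determined by the exponent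
   [m i1 + 3 * m i2] of its pullback, so no cancellation can occur. *)
Lemma pullback_reduced_eq0 F d : F \is d.-homog -> {in msupp F, forall m, m i1 < 3}%N ->
  pullback F = 0 -> F = 0.
Proof.
move=> /dhomogP Fd Fred F0; apply/mpolyP => M; rewrite mcoeff0.
have [MF|/memN_msupp_eq0 //] := boolP (M \in msupp F).
have := congr1 (coefp (M i1 + 3 * M i2)) F0; rewrite /= coef0 pullback_coef.
rewrite (bigD1_seq M) ?msupp_uniq //= eqxx mulr1 big1_seq ?addr0 // => m /andP [mM mF].
have md : mdeg m = d := Fd m mF; have Md : mdeg M = d := Fd M MF.
have m3 := Fred m mF; have M3 := Fred M MF; rewrite !mdeg3 in md Md.
case: eqP => [e|]; last by rewrite mulr0.
case/eqP: mM; apply/mnmP => i; case: (ord3P i) => ->; lia.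
Qed.

Lemma cusp_nonconst : ~~ (msize (cusp : {mpoly C[3]}) <= 1)%N.
Proof.
apply/negP => /msize1_polyC cuspC.
have ev (x : 'I_3 -> C) : cusp.@[x] = x i1 ^+ 3 - x i0 ^+ 2 * x i2.
  by rewrite /cusp !exprS !expr0 mevalB !mevalM !mevalXU meval1.
have := congr1 (meval (fun i => (i == i1)%:R)) cuspC.
have := congr1 (meval (fun=> 0)) cuspC.
rewrite !mevalC !ev /= expr1n !mulr0 !subr0 exprS mul0r => <-; apply/eqP.
exact: oner_neq0.
Qed.

Lemma irreducible_pullback_eq0 F d : irreducible_form F d -> pullback F = 0 ->
  exists2 c, c != 0 & F = c *: cusp /\ d = 3%N.
Proof.
case=> d_gt0 F0 Fd Firr PF0.
have [H FE] := cusp_division F.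
have rem0 : cusp_rem F = 0.
  apply: (pullback_reduced_eq0 (cusp_rem_homog Fd)); first exact: cusp_rem_reduced.
  by rewrite pullback_cusp_rem.
rewrite rem0 addr0 in FE.
have [le1|H1] := Firr _ _ FE; first by case/negP: cusp_nonconst.
have HC := msize1_polyC H1.
have {}FE : F = H@_0 *: cusp by rewrite {1}FE {1}HC mulrC mul_mpolyC.
have c0 : H@_0 != 0 by apply: contraNneq F0 => c0; rewrite FE c0 scale0r.
exists H@_0 => //; split => //.
apply: (dhomog_uniq F0 Fd); rewrite FE dhomogZ //; exact: cusp_homog.
Qed.

Lemma local_eq_cusp (c t : C) : local_eq (c *: cusp) t = (- c) *: 'X_w1.
Proof.
rewrite /local_eq comp_mpolyZ /cusp !exprS !expr0 !mulr1 rmorphB /= !rmorphM /= !comp_mpolyXU /=.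
rewrite -!mul_mpolyC mpolyCN; ring.
Qed.

Lemma inf_mult_cusp (c t : C) r : c != 0 -> inf_mult (c *: cusp) t r = 1%N.
Proof.
rewrite -oppr_eq0 /inf_mult local_eq_cusp => c0.
have supp : msupp ((- c) *: 'X_w1 : {mpoly C[2]}) = [:: U_(w1)%MM] by exact: msuppMCX.
have ord1 : ord_at0 ((- c) *: 'X_w1) = 1%N.
  rewrite /ord_at0 supp /= mdeg1; apply/minn_idPl.
  by apply: leq_trans (msize_mdeg_lt _); rewrite ?supp ?mem_seq1.
have step_fix : blowup_step ((- c) *: 'X_w1) = (- c) *: 'X_w1.
  rewrite /blowup_step supp big_seq1 mcoeffZ mcoeffX eqxx mulr1 ord1 mdeg1.
  by rewrite subnn expr0 mul1r mnm1E eqxx expr1.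
suff -> : iter r (@blowup_step C) ((- c) *: 'X_w1) = (- c) *: 'X_w1 by [].
by elim: r => //= r ->.
Qed.

End CuspidalCubic.

Section RootsOfClosedFieldPolynomials.
Variable C : closedFieldType.

Lemma poly_eq_lead_prod_roots (P : {poly C}) (L : seq C) :
  P != 0 -> (size P <= (size L).+1)%N -> (forall z, count_mem z L <= mup z P)%N ->
  P = lead_coef P *: \prod_(w <- L) ('X - w%:P).
Proof.
move=> P0 sizeP Lmup; have [rs Prs] := closed_field_poly_normal P.
have lc0 : lead_coef P != 0 by rewrite lead_coef_eq0.
have mupP z : mup z P = count_mem z rs.
  by rewrite Prs -mul_polyC mupMr ?mu_prod_XsubC // rootC.
have [s sub_s perm_Ls] : exists2 s, subseq s rs & perm_eq L s.
  by apply/count_subseqP => z; rewrite -mupP.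
have size_rs : size P = (size rs).+1 by rewrite Prs size_scale // size_prod_XsubC.
have /eqP s_rs : s == rs.
  rewrite -(size_subseq_leqif sub_s) eqn_leq size_subseq //= -(perm_size perm_Ls).
  by rewrite -ltnS -size_rs.
by rewrite (perm_big _ perm_Ls) s_rs -Prs.
Qed.

Lemma sum_roots_eq0 (P : {poly C}) (L : seq C) :
  P != 0 -> (size P <= (size L).+1)%N -> (forall z, count_mem z L <= mup z P)%N ->
  size L != 0%N -> P`_(size L).-1 = 0 -> \sum_(w <- L) w = 0.
Proof.
move=> P0 sizeP Lmup L0; rewrite (poly_eq_lead_prod_roots P0 sizeP Lmup).
rewrite coefZ coefPn_prod_XsubC // mulrN => /eqP; rewrite oppr_eq0 mulf_eq0.
by rewrite lead_coef_eq0 (negbTE P0) => /eqP.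
Qed.

End RootsOfClosedFieldPolynomials.

Section Ranks.
Variables (N : nat) (S : {set 'I_N}).

Definition rank_in (i : 'I_N) : nat := #|[set j in S | (j < i)%N]|.

Lemma rank_in_lt i : i \in S -> (rank_in i < #|S|)%N.
Proof.
move=> iS; apply: proper_card; apply/properP; split; last by exists i; rewrite ?inE ?ltnn ?andbF.
by apply/subsetP => j; rewrite inE => /andP [].
Qed.

Lemma rank_in_mono (i k : 'I_N) : i \in S -> (i < k)%N -> (rank_in i < rank_in k)%N.
Proof.
move=> iS ik; apply: proper_card; apply/properP; split; last first.
  by exists i; rewrite !inE ?iS ?ik ?ltnn ?andbF.
by apply/subsetP => j; rewrite !inE => /andP [-> /ltn_trans]; apply.
Qed.

Lemma sum_rank_in (g : nat -> nat) :
  (\sum_(i in S) g (rank_in i) = \sum_(r < #|S|) g r)%N.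
Proof.
have rank_inj : {in S &, injective rank_in}.
  move=> i k iS kS eq_ik; apply: val_inj; case: (ltngtP i k) => // [ik|ki].
    by have := rank_in_mono iS ik; rewrite eq_ik ltnn.
  by have := rank_in_mono kS ki; rewrite eq_ik ltnn.
have ranks : perm_eq [seq rank_in i | i <- enum S] (iota 0 #|S|).
  have uniq_ranks : uniq [seq rank_in i | i <- enum S].
    by rewrite map_inj_in_uniq ?enum_uniq // => i k; rewrite !mem_enum; apply: rank_inj.
  have sub_iota : {subset [seq rank_in i | i <- enum S] <= iota 0 #|S|}.
    by move=> r /mapP [i iS ->]; rewrite mem_iota add0n rank_in_lt // -mem_enum.
  have size_le : (size (iota 0 #|S|) <= size [seq rank_in i | i <- enum S])%N.
    by rewrite size_map size_iota cardE.
  apply: uniq_perm; rewrite ?iota_uniq //.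
  exact: (uniq_min_size uniq_ranks sub_iota size_le).2.
rewrite -big_enum -(big_map _ xpredT) (perm_big _ ranks).
by rewrite -{1}(subn0 #|S|) -/(index_iota 0 #|S|) big_mkord.
Qed.

End Ranks.

Section CurveClasses.
Variables (R : realType) (n : nat) (v : 'I_n.+1 -> R[i]).

Definition class_vec (d : nat) (m : 'I_n.+1 -> nat) : lat n :=
  [ffun i : 'I_n.+1 => if (i : nat) == 0%N then (d : int) else - (m i : int)].

Lemma mdot_class_vec (d : nat) (m : 'I_n.+1 -> nat) (y : lat n) :
  mdot (class_vec d m) y = d%:Z * y ord0 + \sum_(i < n.+1 | i != ord0) (m i)%:Z * y i.
Proof.
rewrite /mdot (bigD1 ord0) //= ffunE /msign /= mul1r; congr (_ + _).
apply: eq_bigr => i i_neq0; rewrite ffunE /msign -val_eqE /= in i_neq0 *.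
by rewrite (negbTE i_neq0) mulN1r opprK.
Qed.

Lemma mdotC_class_vec (d : nat) (m : 'I_n.+1 -> nat) :
  mdotC (class_vec d m) v = d%:R * v ord0 + \sum_(i < n.+1 | i != ord0) (m i)%:R * v i.
Proof.
rewrite /mdotC (bigD1 ord0) //= ffunE /msign /= mul1r; congr (_ + _).
apply: eq_bigr => i i_neq0; rewrite ffunE /msign -val_eqE /= in i_neq0 *.
by rewrite (negbTE i_neq0) mulN1r opprK.
Qed.

Lemma mdot_class_vec_canon (d : nat) (m : 'I_n.+1 -> nat) :
  mdot (class_vec d m) (canon n) = (\sum_(i < n.+1 | i != ord0) m i)%:R - (3 * d)%:R.
Proof.
rewrite mdot_class_vec ffunE /= natr_sum natrM !natz mulrN mulrC addrC; congr (_ - _).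
apply: eq_bigr => i i_neq0; rewrite ffunE -val_eqE /= in i_neq0 *.
by rewrite (negbTE i_neq0) mulr1 natz.
Qed.

Lemma mdot_class_vec_norm (d : nat) (m : 'I_n.+1 -> nat) :
  mdot (class_vec d m) (class_vec d m) = (d * d)%:R - (\sum_(i < n.+1 | i != ord0) m i * m i)%:R.
Proof.
rewrite mdot_class_vec ffunE /= natr_sum natrM !natz -sumrN; congr (_ + _).
apply: eq_bigr => i i_neq0; rewrite ffunE -val_eqE /= in i_neq0 *.
by rewrite (negbTE i_neq0) mulrN natrM !natz.
Qed.

Section IrreducibleCurve.
Variables (F : {mpoly R[i][3]}) (d : nat).
Hypothesis irrF : irreducible_form F d.

Let mult (i : 'I_n.+1) : nat := inf_mult F (tau v i) (rank0 v i).

Lemma mult_sum_le_mup z : pullback F != 0 ->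
  (\sum_(i < n.+1 | (i != ord0) && (tau v i == z)) mult i <= mup z (pullback F))%N.
Proof.
move=> PF0; set S := [set i : 'I_n.+1 | (i != ord0) && (tau v i == z)].
have -> : (\sum_(i < n.+1 | (i != ord0) && (tau v i == z)) mult i =
           \sum_(i in S) inf_mult F z (rank_in S i))%N.
  apply: eq_big => [i|i /andP [_ /eqP tz]]; first by rewrite inE.
  rewrite /mult /rank0 /rank_in tz; congr inf_mult; apply: eq_card => j.
  by rewrite !inE andbAC lt0n.
rewrite sum_rank_in mup_geq //; exact: pullback_inf_mult_dvd.
Qed.

Lemma sum_tau_mult_eq0 : pullback F != 0 ->
  (\sum_(i < n.+1 | i != ord0) mult i = 3 * d)%N ->
  \sum_(i < n.+1 | i != ord0) tau v i *+ mult i = 0.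
Proof.
move=> PF0 sum_mult; have [d_gt0 _ Fd _] := irrF.
pose L := flatten
  [seq nseq (mult i) (tau v i) | i <- [seq i <- index_enum 'I_n.+1 | i != ord0]].
have sizeL : size L = (3 * d)%N.
  rewrite size_flatten /shape -map_comp sumnE big_map big_filter -sum_mult.
  by apply: eq_bigr => i _; rewrite /= size_nseq.
have countL z : count_mem z L = (\sum_(i < n.+1 | (i != ord0) && (tau v i == z)) mult i)%N.
  rewrite count_flatten -map_comp sumnE big_map big_filter big_mkcondr /=.
  by apply: eq_bigr => i _; rewrite count_nseq /=; case: (_ == _); rewrite ?mul1n ?mul0n.
have <- : \sum_(w <- L) w = \sum_(i < n.+1 | i != ord0) tau v i *+ mult i.
  rewrite big_flatten /= big_map big_filter; apply: eq_bigr => i _.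
  by elim: (mult i) => [|k IHk]; rewrite ?big_nil //= big_cons IHk mulrS.
apply: (sum_roots_eq0 PF0); rewrite ?sizeL ?size_pullback -?lt0n ?muln_gt0 //.
  by move=> z; rewrite countL; exact: mult_sum_le_mup.
exact: pullback_coef_pred.
Qed.

Lemma root_class_pullback_neq0 : mdot (class_vec d mult) (canon n) = 0 ->
  mdot (class_vec d mult) (class_vec d mult) = -2 -> pullback F != 0.
Proof.
rewrite mdot_class_vec_canon mdot_class_vec_norm !natz => sum_m sum_m2.
apply/negP => /eqP /(irreducible_pullback_eq0 irrF) [c c0 [FE d3]].
have mult1 i : mult i = 1%N by rewrite /mult FE inf_mult_cusp.
have : (\sum_(i < n.+1 | i != ord0) mult i * mult i = \sum_(i < n.+1 | i != ord0) mult i)%N.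
  by apply: eq_bigr => i _; rewrite mult1.
lia.
Qed.

Lemma class_vec_mdotC : mdot (class_vec d mult) (canon n) = 0 ->
  mdot (class_vec d mult) (class_vec d mult) = -2 -> mdotC (class_vec d mult) v = 0.
Proof.
move=> aK aa; have PF0 := root_class_pullback_neq0 aK aa.
have sum_m : (\sum_(i < n.+1 | i != ord0) mult i = 3 * d)%N.
  by move: aK; rewrite mdot_class_vec_canon !natz; lia.
have := sum_tau_mult_eq0 PF0 sum_m.
rewrite (eq_bigr (fun i => - ((mult i)%:R * v i) - (mult i)%:R * (v ord0 / 3%:R))); last first.
  by move=> i _; rewrite /tau -mulr_natl; ring.
rewrite sumrB sumrN -mulr_suml -natr_sum sum_m => /eqP; rewrite subr_eq0 => /eqP sum_mv.
by rewrite mdotC_class_vec -[X in _ + X]opprK sum_mv natrM; field.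
Qed.

End IrreducibleCurve.

End CurveClasses.

Lemma curve_class_mdotC (R : realType) (n : nat) (v : 'I_n.+1 -> R[i]) (a : lat n) :
  curve_class v a -> mdot a (canon n) = 0 -> mdot a a = -2 -> mdotC a v = 0.
Proof. by case=> F [d [irrF ->]]; apply: class_vec_mdotC. Qed.

Theorem lemma6p6 (R : realType) (n : nat) (hn : (3 <= n)%N)
  (v : 'I_n.+1 -> R[i]) (a : lat n) :
  nodal_root v a -> mdotC a v = 0.
Proof.
case=> a_pos a_class; have [aK aa] := pos_root_canon_norm hn a_pos.
by case: a_class => [/curve_class_mdotC|/exc_class_mdotC]; apply.
Qed.
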